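(* Let $p_0,p_1,\dots,p_{n-1}$ ($n\ge 3$) be distinct points in $\mathbb{R}^2$, indices taken modulo $n$ (so $p_n=p_0$), such that $P=\bigcup_{i=1}^n I_i$, $I_i=[p_{i-1},p_i]$, is a simple closed $n$-gon. For $1\le i\le n$ let $u_i$ be the unit vector perpendicular to the line $\mathrm{aff}\, I_i$ oriented so that for every $b\in\mathrm{relint}\, I_i$ and all sufficiently small $\varepsilon>0$ one has $b+\varepsilon u_i\in\mathrm{ext}P$ and $b-\varepsilon u_i\in\mathrm{int}P$, and put $u_{i,i+1}=u_i+u_{i+1}$ (with $u_{n+1}=u_1$). Then for every sufficiently small $\varepsilon>0$ we have $p_i+\varepsilon u_{i,i+1}\in\mathrm{ext}P$ and $p_i-\varepsilon u_{i,i+1}\in\mathrm{int}P$ for all $1\le i\le n$.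
   Context: A simple closed $n$-gon is a polygon $P=\bigcup_{i=1}^n[p_{i-1},p_i]$ with $n$ distinct vertices $p_0,\dots,p_{n-1}$, $p_n=p_0$, whose edges intersect only in the common endpoints of consecutive edges ($[p_{i-1},p_i]\cap[p_i,p_{i+1}]=\{p_i\}$, $[p_0,p_1]\cap[p_{n-1},p_0]=\{p_0\}$, and non-consecutive edges are disjoint). $\mathbb{R}^2\setminus P$ has exactly two connected components; the bounded one is $\mathrm{int}P$ (interior), the unbounded one is $\mathrm{ext}P$ (exterior), and $P$ is the boundary of each. $\mathrm{relint}$ denotes relative interior, $\mathrm{aff}$ affine hull. *)

From HB Require Import structures.
From mathcomp Require Import all_boot all_order all_algebra.
From mathcomp Require Import all_classical all_reals all_analysis.
Set Implicit Arguments. Unset Strict Implicit. Unset Printing Implicit Defensive.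
Import Order.TTheory GRing.Theory Num.Theory.
Import numFieldNormedType.Exports.
Local Open Scope classical_set_scope.
Local Open Scope ring_scope.

Section Defs.
Variable R : realType.
Notation pt := (R * R)%type.

Definition padd (a b : pt) : pt := (a.1 + b.1, a.2 + b.2).
Definition psub (a b : pt) : pt := (a.1 - b.1, a.2 - b.2).
Definition pscale (t : R) (a : pt) : pt := (t * a.1, t * a.2).
Definition pdot (a b : pt) : R := a.1 * b.1 + a.2 * b.2.

Definition segment (a b : pt) : set pt :=
  [set padd a (pscale t (psub b a)) | t in [set t : R | 0 <= t <= 1]].
Definition relint_segment (a b : pt) : set pt :=
  [set padd a (pscale t (psub b a)) | t in [set t : R | 0 < t < 1]].

(* vertices p_0..p_{n-1}, indices modulo n; edge i (0 <= i < n) is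
   [p_i, p_{i+1}] (this is I_{i+1} in the paper's 1-based numbering) *)
Definition vtx (n : nat) (p : nat -> pt) (i : nat) : pt := p (i %% n)%N.
Definition edge (n : nat) (p : nat -> pt) (i : nat) : set pt :=
  segment (vtx n p i) (vtx n p i.+1).

Definition polygon (n : nat) (p : nat -> pt) : set pt :=
  \bigcup_(i in [set i : nat | (i < n)%N]) edge n p i.

Definition simple_polygon (n : nat) (p : nat -> pt) : Prop :=
  [/\ (3 <= n)%N,
      (forall i j, (i < n)%N -> (j < n)%N -> i <> j -> p i <> p j),
      (forall i, (i < n)%N ->
         edge n p i `&` edge n p i.+1 = [set vtx n p i.+1]) &
      (forall i j, (i < n)%N -> (j < n)%N -> i <> j ->
         j <> (i.+1 %% n)%N -> i <> (j.+1 %% n)%N ->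
         edge n p i `&` edge n p j = set0)].

Definition bounded_pt (A : set pt) : Prop :=
  exists M : R, forall y, A y -> `|y.1| <= M /\ `|y.2| <= M.

Definition interior_poly (P : set pt) : set pt :=
  [set x | ~ P x /\ bounded_pt (@connected_component (R * R)%type (~` P) x)].
Definition exterior_poly (P : set pt) : set pt :=
  [set x | ~ P x /\ ~ bounded_pt (@connected_component (R * R)%type (~` P) x)].

Definition outer_unit_normal (n : nat) (p : nat -> pt) (i : nat) (u : pt) : Prop :=
  [/\ pdot u u = 1,
      pdot u (psub (vtx n p i.+1) (vtx n p i)) = 0 &
      forall b, relint_segment (vtx n p i) (vtx n p i.+1) b ->
        exists2 e0 : R, 0 < e0 & forall e : R, 0 < e < e0 ->
          exterior_poly (polygon n p) (padd b (pscale e u)) /\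
          interior_poly (polygon n p) (psub b (pscale e u))].

End Defs.

From HB Require Import structures.
From mathcomp Require Import all_boot all_order all_algebra.
From mathcomp Require Import all_classical all_reals all_analysis.
From mathcomp Require Import ring lra.
Set Implicit Arguments. Unset Strict Implicit. Unset Printing Implicit Defensive.
Import Order.TTheory GRing.Theory Num.Theory.
Import numFieldNormedType.Exports.
Local Open Scope classical_set_scope.
Local Open Scope ring_scope.

(* Near the vertex v = p_i, with d1 = p_(i-1) - v and d2 = p_(i+1) - v, the polygon
   lies on the two rays v + R+ d1 and v + R+ d2, and the two edge normals U, W
   satisfy U.d1 = W.d2 = 0.  If U and W lie on the same side of the corner, i.e.
   pcross d1 U * pcross d2 W < 0, then for b = v + s d1 on the first edge and e small
   the segment from v + e (U + W) to b + e U misses both rays, so v + e (U + W) lies in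
   the component of the exterior point b + e U; with -U, -W in place of U, W the same
   argument puts v - e (U + W) in the interior.  In the opposite case the analogous
   segments join v + e (U - W) both to the exterior point b + e U and to the interior
   point v + s d2 - e W, which is impossible. *)

Section ConvexCombination.
Variable R : realFieldType.
Implicit Types t a b c e M : R.

Lemma convex_gt0 t a b : 0 <= t <= 1 -> 0 < a -> 0 < b -> 0 < (1 - t) * a + t * b.
Proof.
move=> /andP[t_ge0 t_le1] a_gt0 b_gt0; have [<-|t_gt0] := eqVneq 0 t.
  by rewrite subr0 mul1r mul0r addr0.
apply: ltr_wpDl; first by rewrite mulr_ge0 ?subr_ge0 // ltW.
by rewrite mulr_gt0 // lt_def eq_sym t_gt0.
Qed.

Lemma norm_convex_lt t a b M : 0 <= t <= 1 -> `|a| < M -> `|b| < M ->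
  `|(1 - t) * a + t * b| < M.
Proof.
move=> t01; rewrite !ltr_norml => /andP[Ma aM] /andP[Mb bM].
have lo : 0 < (1 - t) * (a + M) + t * (b + M) by apply: convex_gt0 => //; lra.
have hi : 0 < (1 - t) * (M - a) + t * (M - b) by apply: convex_gt0 => //; lra.
by apply/andP; split; lra.
Qed.

Lemma norm_scale_le e c : 0 <= e -> `|c| <= 1 -> `|e * c| <= e.
Proof. by move=> e_ge0 c_le1; rewrite normrM ger0_norm // ler_piMr. Qed.

End ConvexCombination.

Section ForSmall.
Variable R : realFieldType.
Implicit Types P Q : R -> Prop.

Definition for_small Q := exists2 e0 : R, 0 < e0 & forall e, 0 < e < e0 -> Q e.

Lemma for_smallW P Q : (forall e, 0 < e -> P e -> Q e) -> for_small P -> for_small Q.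
Proof.
by move=> PQ [e0 e0_gt0 P_small]; exists e0 => // e /[dup] /andP[e_gt0 _] /P_small/PQ; apply.
Qed.

Lemma for_smallI P Q : for_small P -> for_small Q -> for_small (fun e => P e /\ Q e).
Proof.
move=> [e1 e1_gt0 P_small] [e2 e2_gt0 Q_small].
exists (Num.min e1 e2); first by rewrite lt_min e1_gt0 e2_gt0.
move=> e /andP[e_gt0]; rewrite lt_min => /andP[e_lt1 e_lt2].
by split; [apply: P_small | apply: Q_small]; rewrite e_gt0.
Qed.

Lemma for_small_forall_ltn n (Q : nat -> R -> Prop) :
  (forall i, (i < n)%N -> for_small (Q i)) -> for_small (fun e => forall i, (i < n)%N -> Q i e).
Proof.
elim: n => [|n IH] Q_small; first by exists 1.
have Qn := Q_small n (ltnSn n).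
have Qlt : for_small (fun e => forall i, (i < n)%N -> Q i e).
  by apply: IH => i /ltnW; apply: Q_small.
apply: for_smallW (for_smallI Qlt Qn) => e _ [Q_lt Q_n] i.
by rewrite ltnS leq_eqVlt => /predU1P[-> //|]; apply: Q_lt.
Qed.

Lemma for_small_witness Q : for_small Q -> exists2 e, 0 < e & Q e.
Proof.
move=> [e0 e0_gt0 Q_small]; exists (e0 / 2); first by rewrite divr_gt0.
by apply: Q_small; rewrite divr_gt0 //= ltr_pdivrMr // ltr_pMr // ltr1n.
Qed.

Lemma for_small_lt (c : R) : 0 < c -> for_small (fun e => e < c).
Proof. by move=> c_gt0; exists c => // e /andP[]. Qed.

Lemma for_small_normM_lt (c d : R) : 0 < d -> for_small (fun e => `|e * c| < d).
Proof.
move=> d_gt0; have c1_gt0 : 0 < `|c| + 1 by rewrite ltr_wpDl.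
exists (d / (`|c| + 1)); first by rewrite divr_gt0.
move=> e /andP[e_gt0]; rewrite ltr_pdivlMr // => e_lt.
rewrite normrM (gtr0_norm e_gt0); apply: le_lt_trans e_lt.
by apply: ler_wpM2l; [exact: ltW | rewrite lerDl].
Qed.

End ForSmall.

Section Segments.
Variable R : realType.
Local Notation pt := (R * R)%type.
Implicit Types (a b v x : pt) (A P : set pt).

Definition segment_path a b (t : R) : pt := padd a (pscale t (psub b a)).

Lemma segmentE a b : segment a b = segment_path a b @` `[0, 1].
Proof. by apply/seteqP; split=> x [t t01 <-]; exists t; rewrite //= in_itv. Qed.

Lemma continuous_segment_path a b : continuous (segment_path a b).
Proof.
move=> t; rewrite /continuous_at /segment_path /padd /pscale /psub /=.
apply: (@cvg_pair _ _ _ (nbhs t) (nbhs (a.1 + t * (b.1 - a.1))) (nbhs (a.2 + t * (b.2 - a.2))));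
  by apply: cvgD; [exact: cvg_cst | apply: cvgM; [exact: cvg_id | exact: cvg_cst]].
Qed.

Lemma closed_segment a b : closed (segment a b).
Proof.
rewrite segmentE; apply: compact_closed; first exact: norm_hausdorff.
apply: continuous_compact; last exact: segment_compact.
exact/continuous_subspaceT/continuous_segment_path.
Qed.

Lemma connected_segment a b : connected (segment a b).
Proof.
rewrite segmentE; apply: connected_continuous_connected; first exact: segment_connected.
exact/continuous_subspaceT/continuous_segment_path.
Qed.

Lemma segment_start a b : segment a b a.
Proof.
by exists 0; rewrite /= ?lexx ?ler01 // /padd /pscale !mul0r !addr0 -surjective_pairing.
Qed.

Lemma segment_end a b : segment a b b.
Proof.
exists 1; first by rewrite /= lexx ler01.
by rewrite /padd /pscale /psub !mul1r !subrKC -surjective_pairing.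
Qed.

Lemma connected_component_segment A a b : segment a b `<=` A ->
  connected_component A a = connected_component A b.
Proof.
move=> abA; apply: same_connected_component.
by apply: (connected_component_max (segment_start a b) abA);
  [exact: connected_segment | exact: segment_end].
Qed.

Lemma exterior_poly_segment P a b : segment a b `<=` ~` P ->
  exterior_poly P b -> exterior_poly P a.
Proof.
move=> abP [_ unbounded]; split; first exact: abP (segment_start a b).
by rewrite (connected_component_segment abP).
Qed.

Lemma interior_poly_segment P a b : segment a b `<=` ~` P ->
  interior_poly P b -> interior_poly P a.
Proof.
move=> abP [_ bounded]; split; first exact: abP (segment_start a b).
by rewrite (connected_component_segment abP).
Qed.

Lemma interior_poly_exterior P x : interior_poly P x -> ~ exterior_poly P x.
Proof. by move=> [_ bounded] [_]. Qed.

Lemma segment_translate v a b : segment (padd v a) (padd v b) = padd v @` segment a b.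
Proof.
apply/seteqP; split=> [_ [t t01 <-] | _ [_ [t t01 <-] <-]].
  exists (segment_path a b t); first by exists t.
  by rewrite /segment_path /padd /pscale /psub /=; congr (_, _); ring.
by exists t => //; rewrite /padd /pscale /psub /=; congr (_, _); ring.
Qed.

Lemma segment_box a b x (d : R) : segment a b x ->
  `|a.1| < d -> `|a.2| < d -> `|b.1| < d -> `|b.2| < d -> `|x.1| < d /\ `|x.2| < d.
Proof.
move=> [t t01 <-] a1 a2 b1 b2; rewrite /padd /pscale /psub /=.
rewrite (_ : a.1 + _ = (1 - t) * a.1 + t * b.1); last by ring.
rewrite (_ : a.2 + _ = (1 - t) * a.2 + t * b.2); last by ring.
by split; apply: norm_convex_lt.
Qed.

Lemma closed_notin_box A v : closed A -> ~ A v ->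
  for_small (fun d => forall x, `|x.1| < d -> `|x.2| < d -> ~ A (padd v x)).
Proof.
move=> A_closed Av.
have /nbhs_ballP[d d_gt0 dA] : nbhs v (~` A).
  by apply: open_nbhs_nbhs; split; [exact: closed_openC|].
exists d => // d' /andP[_ d'_lt] x x1 x2; apply: dA.
by split; rewrite /ball /= /padd /= opprD addNKr normrN (lt_trans _ d'_lt).
Qed.

End Segments.

Section PlaneVectors.
Variable R : realType.
Local Notation pt := (R * R)%type.
Implicit Types a b c d m u v w x : pt.

Definition pcross a b : R := a.1 * b.2 - a.2 * b.1.
Definition popp a : pt := (- a.1, - a.2).
Definition ray d : set pt := [set pscale al d | al in [set al : R | 0 <= al]].
Definition rays_near (P : set pt) v d1 d2 (δ : R) := forall x,
  `|x.1| < δ -> `|x.2| < δ -> P (padd v x) -> ray d1 x \/ ray d2 x.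
Definition outer_normal_at (P : set pt) b u := for_small (fun e =>
  exterior_poly P (padd b (pscale e u)) /\ interior_poly P (psub b (pscale e u))).
Definition codirected a b := pcross a b = 0 /\ 0 < pdot a b.

Lemma rays_nearC P v d1 d2 (δ : R) : rays_near P v d1 d2 δ -> rays_near P v d2 d1 δ.
Proof. by move=> near_v x x1 x2 /(near_v x x1 x2) []; [right | left]. Qed.

Lemma paddA a b c : padd (padd a b) c = padd a (padd b c).
Proof. by rewrite /padd /= !addrA. Qed.

Lemma paddC a b : padd a b = padd b a.
Proof. by rewrite /padd addrC [a.2 + _]addrC. Qed.

Lemma psub_pscale b (e : R) a : psub b (pscale e a) = padd b (pscale e (popp a)).
Proof. by rewrite /psub /padd /pscale /popp /= !mulrN. Qed.

Lemma popp_padd a b : popp (padd a b) = padd (popp a) (popp b).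
Proof. by rewrite /popp /padd /= !opprD. Qed.

Lemma pdotNl a b : pdot (popp a) b = - pdot a b.
Proof. by rewrite /pdot /popp /=; ring. Qed.

Lemma pdotNN a b : pdot (popp a) (popp b) = pdot a b.
Proof. by rewrite /pdot /popp /=; ring. Qed.

Lemma pcrossNr a b : pcross a (popp b) = - pcross a b.
Proof. by rewrite /pcross /popp /=; ring. Qed.

Lemma pdotC a b : pdot a b = pdot b a.
Proof. by rewrite /pdot; ring. Qed.

Lemma pcrossC a b : pcross a b = - pcross b a.
Proof. by rewrite /pcross; ring. Qed.

Lemma codirectedC a b : codirected a b -> codirected b a.
Proof. by rewrite /codirected pcrossC pdotC => -[/eqP]; rewrite oppr_eq0 => /eqP. Qed.

Lemma pdot_ge0 a : 0 <= pdot a a.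
Proof. by rewrite /pdot -!expr2 addr_ge0 ?sqr_ge0. Qed.

Lemma pdot_eq0 a : pdot a a = 0 -> a = 0.
Proof.
move/eqP; rewrite /pdot paddr_eq0 -?expr2 ?sqr_ge0 // !sqrf_eq0 => /andP[/eqP a1 /eqP a2].
by rewrite [a]surjective_pairing a1 a2.
Qed.

Lemma pdot_gt0 a : a <> 0 -> 0 < pdot a a.
Proof. by move=> a_neq0; rewrite lt_def pdot_ge0 andbT; apply/eqP => /pdot_eq0. Qed.

(* Lagrange's identity in the plane, polarised in its last argument. *)
Lemma pdot_pcross d u x :
  pdot d d * pdot u x = pdot u d * pdot d x + pcross d u * pcross d x.
Proof. by rewrite /pdot /pcross; ring. Qed.

Lemma pcross_unit_perp_neq0 u d : pdot u u = 1 -> pdot u d = 0 -> d <> 0 ->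
  pcross d u != 0.
Proof.
move=> u_unit u_perp /pdot_gt0 d_gt0; apply/eqP => cross0.
by have := pdot_pcross d u u; rewrite u_unit u_perp cross0 !mul0r addr0 mulr1 => d0; lra.
Qed.

Lemma perp_pcross0 u a b : 0 < pdot u u -> pdot u a = 0 -> pdot u b = 0 -> pcross a b = 0.
Proof.
move=> u_gt0 ua ub.
have : pdot u u * pcross a b = pdot u a * pcross u b - pdot u b * pcross u a.
  by rewrite /pdot /pcross; ring.
by rewrite ua ub !mul0r subrr => /eqP; rewrite mulf_eq0 gt_eqF // => /eqP.
Qed.

Lemma unit_coord_le1 u : pdot u u = 1 -> `|u.1| <= 1 /\ `|u.2| <= 1.
Proof.
rewrite /pdot => u_unit; have := sqr_ge0 u.1; have := sqr_ge0 u.2; rewrite !expr2 => ? ?.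
by split; rewrite ler_norml; apply/andP; split; nra.
Qed.

Lemma ray_pdot d x : ray d x -> exists2 al : R, 0 <= al & forall m, pdot m x = al * pdot m d.
Proof. by move=> [al al_ge0 <-]; exists al => // m; rewrite /pdot /pscale /=; ring. Qed.

Lemma off_rays d1 d2 u w x : pdot u d1 = 0 -> pdot w d2 = 0 ->
  0 < pdot u x -> (0 < pdot u d2 -> 0 < pdot w x) -> ~ ray d1 x /\ ~ ray d2 x.
Proof.
move=> u_perp w_perp ux_gt0 wx_gt0; split=> /ray_pdot[al al_ge0 x_al].
  by move: ux_gt0; rewrite x_al u_perp mulr0 ltxx.
have ud2_gt0 : 0 < pdot u d2.
  by move: ux_gt0; rewrite x_al; apply: contraTT; rewrite -!leNgt; apply: mulr_ge0_le0.
by move: (wx_gt0 ud2_gt0); rewrite x_al w_perp mulr0 ltxx.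
Qed.

End PlaneVectors.

Section CornerGeometry.
Variable R : realType.
Local Notation pt := (R * R)%type.
Variables d1 d2 u w : pt.
Hypotheses (u_unit : pdot u u = 1) (w_unit : pdot w w = 1).
Hypotheses (u_perp : pdot u d1 = 0) (w_perp : pdot w d2 = 0).
Hypothesis normals_cross : pcross d1 u * pcross d2 w < 0.

(* By [pdot_pcross], |d1|^2 (u.d2) = k1 c and |d2|^2 (w.d1) = - k2 c, where
   k1 = pcross d1 u, k2 = pcross d2 w and c = pcross d1 d2; the product has the sign
   of - k1 k2 c^2 > 0. *)
Lemma normal_pdot_gt0 : 0 < pdot u d2 -> 0 < pdot w d1.
Proof.
move=> ud2_gt0.
have d1_gt0 : 0 < pdot d1 d1.
  apply: pdot_gt0 => d1_0; move: normals_cross.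
  by rewrite d1_0 /pcross /= !mul0r subrr mul0r ltxx.
have id1 := pdot_pcross d1 u d2; have id2 := pdot_pcross d2 w d1.
rewrite u_perp mul0r add0r in id1; rewrite w_perp mul0r add0r (pcrossC d2 d1) mulrN in id2.
have k1c_gt0 : 0 < pcross d1 u * pcross d1 d2 by rewrite -id1 mulr_gt0.
have c2_gt0 : 0 < pcross d1 d2 * pcross d1 d2.
  rewrite lt_def -expr2 sqr_ge0 andbT sqrf_eq0; apply: contraTN k1c_gt0 => /eqP->.
  by rewrite mulr0 ltxx.
have : 0 < (pcross d1 u * pcross d1 d2) * (pdot d2 d2 * pdot w d1).
  rewrite id2 (_ : _ * - _ = - (pcross d1 u * pcross d2 w) * (pcross d1 d2 * pcross d1 d2)).
    by rewrite mulr_gt0 // oppr_gt0.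
  by ring.
rewrite pmulr_rgt0 // => D2wd1_gt0; rewrite ltNge; apply: contraTN D2wd1_gt0 => wd1_le0.
by rewrite -leNgt mulr_ge0_le0 ?pdot_ge0.
Qed.

Hypothesis not_codirected : ~ codirected d1 d2.

(* Otherwise u + w = 0, and d1, d2 would both be perpendicular to u and point the
   same way. *)
Lemma pdot_normals_gtN1 : -1 < pdot u w.
Proof.
rewrite ltNge; apply/negP => uw_le; apply: not_codirected.
have : padd u w = 0.
  apply: pdot_eq0; apply/eqP; rewrite eq_le pdot_ge0 andbT.
  have -> : pdot (padd u w) (padd u w) = pdot u u + pdot w w + 2 * pdot u w.
    by rewrite /pdot /padd /=; ring.
  by rewrite u_unit w_unit; lra.
rewrite /padd => -[uw1 uw2].
have w_opp : w = popp u by rewrite [w]surjective_pairing /popp; congr (_, _); lra.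
have := w_perp; have := normals_cross; rewrite w_opp pdotNl pcrossNr => cross_lt0 /eqP.
rewrite oppr_eq0 => /eqP ud2.
split; first by apply: perp_pcross0 u_perp ud2; rewrite u_unit.
have := pdot_pcross u d1 d2.
rewrite u_unit (pdotC d1 u) u_perp mul0r add0r mul1r => ->.
rewrite (pcrossC u d1) (pcrossC u d2); lra.
Qed.

(* Along the segment u.x > 0, which keeps it off the first ray; it could only reach
   the second one if u.d2 > 0, and then w.d1 > 0 and the bound on e give w.x > 0. *)
Lemma corner_segment_off_rays (s e : R) x : 0 < s -> 0 < e ->
  (0 < pdot w d1 -> e < s * pdot w d1) ->
  segment (pscale e (padd u w)) (padd (pscale s d1) (pscale e u)) x ->
  ~ ray d1 x /\ ~ ray d2 x.
Proof.
move=> s_gt0 e_gt0 e_small [t t01 <-].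
have eA_gt0 : 0 < e * (1 + pdot u w) by rewrite mulr_gt0 //; have := pdot_normals_gtN1; lra.
apply: off_rays u_perp w_perp _ _.
  rewrite [pdot u _](_ : _ = (1 - t) * (e * (pdot u u + pdot u w))
                            + t * (s * pdot u d1 + e * pdot u u)).
    by rewrite u_unit u_perp mulr0 add0r mulr1; apply: convex_gt0.
  by rewrite /pdot /padd /pscale /psub /=; ring.
move=> /normal_pdot_gt0 /e_small e_lt.
rewrite [pdot w _](_ : _ = (1 - t) * (e * (pdot w u + pdot w w))
                          + t * (s * pdot w d1 + e * pdot w u)).
  by rewrite w_unit (pdotC w u) [_ + 1]addrC; apply: convex_gt0 => //; lra.
by rewrite /pdot /padd /pscale /psub /=; ring.
Qed.

Lemma corner_segment_avoids (P : set pt) v (δ s : R) :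
  rays_near P v d1 d2 δ -> 0 < s -> `|s * d1.1| < δ / 2 -> `|s * d1.2| < δ / 2 ->
  for_small (fun e => segment (padd v (pscale e (padd u w)))
                              (padd (padd v (pscale s d1)) (pscale e u)) `<=` ~` P).
Proof.
move=> near_v s_gt0 sd1 sd2.
have δ_gt0 : 0 < δ by have := normr_ge0 (s * d1.1); lra.
have e_small : for_small (fun e => e < δ / 4 /\ (0 < pdot w d1 -> e < s * pdot w d1)).
  apply: for_smallI; first by apply: for_small_lt; rewrite divr_gt0.
  have [wd1_gt0|wd1_le0] := ltP 0 (pdot w d1).
    by apply: for_smallW (for_small_lt (mulr_gt0 s_gt0 wd1_gt0)) => e _ e_lt _.
  by exists 1 => // e _; rewrite ltNge wd1_le0.
apply: for_smallW e_small => e e_gt0 [e_lt_δ e_small].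
rewrite paddA segment_translate => _ [x seg_x <-] Pvx.
have [not_ray1 not_ray2] := corner_segment_off_rays s_gt0 e_gt0 e_small seg_x.
have [u1 u2] := unit_coord_le1 u_unit; have [w1 w2] := unit_coord_le1 w_unit.
have [eu1 eu2] := (norm_scale_le (ltW e_gt0) u1, norm_scale_le (ltW e_gt0) u2).
have [ew1 ew2] := (norm_scale_le (ltW e_gt0) w1, norm_scale_le (ltW e_gt0) w2).
have [x1 x2] : `|x.1| < δ /\ `|x.2| < δ.
  apply: (segment_box seg_x); rewrite /padd /pscale /= ?mulrDr;
    by apply: le_lt_trans (ler_normD _ _) _; lra.
by case: (near_v x x1 x2 Pvx).
Qed.

End CornerGeometry.

Section Corner.
Variable R : realType.
Local Notation pt := (R * R)%type.
Variables (P : set pt) (v d1 d2 U W : pt).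
Hypotheses (U_unit : pdot U U = 1) (W_unit : pdot W W = 1).
Hypotheses (U_perp : pdot U d1 = 0) (W_perp : pdot W d2 = 0).
Hypothesis not_codirected : ~ codirected d1 d2.
Hypothesis U_normal : forall s, 0 < s < 1 -> outer_normal_at P (padd v (pscale s d1)) U.
Hypothesis W_normal : forall s, 0 < s < 1 -> outer_normal_at P (padd v (pscale s d2)) W.

Section Scales.
Variables δ s : R.
Hypotheses (near_v : rays_near P v d1 d2 δ) (s01 : 0 < s < 1).
Hypotheses (sd1_1 : `|s * d1.1| < δ / 2) (sd1_2 : `|s * d1.2| < δ / 2).
Hypotheses (sd2_1 : `|s * d2.1| < δ / 2) (sd2_2 : `|s * d2.2| < δ / 2).

Let s_gt0 : 0 < s. Proof. by case/andP: s01. Qed.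

Lemma corner_outer_normal_cross_lt0 :
  pcross d1 U * pcross d2 W < 0 -> outer_normal_at P v (padd U W).
Proof.
move=> cross_lt0.
have cross_opp_lt0 : pcross d1 (popp U) * pcross d2 (popp W) < 0 by rewrite !pcrossNr mulrNN.
have [U'_perp W'_perp] : pdot (popp U) d1 = 0 /\ pdot (popp W) d2 = 0.
  by rewrite !pdotNl U_perp W_perp oppr0.
have [U'_unit W'_unit] : pdot (popp U) (popp U) = 1 /\ pdot (popp W) (popp W) = 1.
  by rewrite !pdotNN.
have avoid_ext := corner_segment_avoids U_unit W_unit U_perp W_perp cross_lt0
  not_codirected near_v s_gt0 sd1_1 sd1_2.
have avoid_int := corner_segment_avoids U'_unit W'_unit U'_perp W'_perp cross_opp_lt0
  not_codirected near_v s_gt0 sd1_1 sd1_2.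
apply: for_smallW (for_smallI (U_normal s01) (for_smallI avoid_ext avoid_int)).
move=> e _ [[ext int] [seg_ext seg_int]]; split; first exact: exterior_poly_segment seg_ext ext.
rewrite psub_pscale popp_padd; apply: interior_poly_segment seg_int _.
by rewrite -psub_pscale.
Qed.

Lemma corner_cross_gt0_absurd : 0 < pcross d1 U * pcross d2 W -> False.
Proof.
move=> cross_gt0.
have cross1 : pcross d1 U * pcross d2 (popp W) < 0 by rewrite pcrossNr mulrN oppr_lt0.
have cross2 : pcross d2 (popp W) * pcross d1 U < 0 by rewrite mulrC.
have W'_unit : pdot (popp W) (popp W) = 1 by rewrite pdotNN.
have W'_perp : pdot (popp W) d2 = 0 by rewrite pdotNl W_perp oppr0.
have avoid1 := corner_segment_avoids U_unit W'_unit U_perp W'_perp cross1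
  not_codirected near_v s_gt0 sd1_1 sd1_2.
have avoid2 := corner_segment_avoids W'_unit U_unit W'_perp U_perp cross2
  (fun c21 => not_codirected (codirectedC c21)) (rays_nearC near_v) s_gt0 sd2_1 sd2_2.
have [e _ [[ext _] [[_ int] [seg1 seg2]]]] := for_small_witness
  (for_smallI (U_normal s01) (for_smallI (W_normal s01) (for_smallI avoid1 avoid2))).
rewrite psub_pscale in int.
apply: interior_poly_exterior (interior_poly_segment seg2 int) _.
by rewrite (paddC (popp W)); exact: exterior_poly_segment seg1 ext.
Qed.

End Scales.

Hypotheses (d1_neq0 : d1 <> 0) (d2_neq0 : d2 <> 0).

Lemma corner_outer_normal : (exists2 δ : R, 0 < δ & rays_near P v d1 d2 δ) ->
  outer_normal_at P v (padd U W).
Proof.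
move=> [δ δ_gt0 near_v]; have δ2_gt0 : 0 < δ / 2 by rewrite divr_gt0.
have [s s_gt0 [s_lt1 [[sd1_1 sd1_2] [sd2_1 sd2_2]]]] := for_small_witness
  (for_smallI (for_small_lt ltr01) (for_smallI
    (for_smallI (for_small_normM_lt d1.1 δ2_gt0) (for_small_normM_lt d1.2 δ2_gt0))
    (for_smallI (for_small_normM_lt d2.1 δ2_gt0) (for_small_normM_lt d2.2 δ2_gt0)))).
have s01 : 0 < s < 1 by rewrite s_gt0.
have := mulf_neq0 (pcross_unit_perp_neq0 U_unit U_perp d1_neq0)
                  (pcross_unit_perp_neq0 W_unit W_perp d2_neq0).
rewrite neq_lt => /orP[cross_lt0|cross_gt0].
  exact: corner_outer_normal_cross_lt0 near_v s01 sd1_1 sd1_2 cross_lt0.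
by case: (corner_cross_gt0_absurd near_v s01 sd1_1 sd1_2 sd2_1 sd2_2 cross_gt0).
Qed.

End Corner.

Section Vertex.
Variable R : realType.
Local Notation pt := (R * R)%type.
Implicit Types a b v c x : pt.

Lemma psub_neq0 a b : a <> b -> psub a b <> 0.
Proof.
move=> a_neq_b; rewrite /psub => -[a1 a2]; apply: a_neq_b.
by rewrite [a]surjective_pairing [b]surjective_pairing; congr (_, _); lra.
Qed.

Lemma segment_end_ray a v x : segment a v (padd v x) -> ray (psub a v) x.
Proof.
move=> [t /andP[_ t_le1]]; rewrite /padd /pscale /psub => -[x1 x2].
exists (1 - t); first by rewrite /= subr_ge0.
by rewrite [x]surjective_pairing /pscale /psub /=; congr (_, _); lra.
Qed.

Lemma segment_start_ray v c x : segment v c (padd v x) -> ray (psub c v) x.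
Proof.
move=> [t /andP[t_ge0 _]]; rewrite /padd /pscale /psub => -[x1 x2].
by exists t => //; rewrite [x]surjective_pairing /pscale /psub /=; congr (_, _); lra.
Qed.

Lemma relint_segment_end a v (s : R) : 0 < s < 1 ->
  relint_segment a v (padd v (pscale s (psub a v))).
Proof.
move=> /andP[s_gt0 s_lt1]; exists (1 - s); first by apply/andP; split; lra.
by rewrite /padd /pscale /psub /=; congr (_, _); ring.
Qed.

Lemma relint_segment_start v c (s : R) : 0 < s < 1 ->
  relint_segment v c (padd v (pscale s (psub c v))).
Proof. by exists s. Qed.

Lemma segments_meet_not_codirected a v c :
  segment a v `&` segment v c = [set v] -> a <> v -> ~ codirected (psub a v) (psub c v).
Proof.
move=> meet a_neq_v [cross0 dot_gt0].
set d1 := psub a v in cross0 dot_gt0 *; set d2 := psub c v in cross0 dot_gt0 *.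
set D := pdot d2 d2; set m := pdot d1 d2.
have D_gt0 : 0 < D.
  apply: pdot_gt0 => d2_0; move: dot_gt0; rewrite /m d2_0 /pdot /=.
  by rewrite !mulr0 addr0 ltxx.
have S_gt0 : 0 < D + m by rewrite addr_gt0.
(* As pcross d1 d2 = 0, D d1 = m d2, so v + g d1 = v + h d2 lies on both segments. *)
set g := D / (D + m); set h := m / (D + m).
have g_gt0 : 0 < g by rewrite divr_gt0.
have g_le1 : g <= 1 by rewrite /g ler_pdivrMr // mul1r lerDl ltW.
have h_ge0 : 0 <= h by rewrite /h divr_ge0 // ltW.
have h_le1 : h <= 1 by rewrite /h ler_pdivrMr // mul1r lerDr ltW.
have gh : pscale g d1 = pscale h d2.
  have e1 : D * d1.1 = m * d2.1.
    apply/eqP; rewrite -subr_eq0 -(mulr0 d2.2) -cross0; apply/eqP.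
    by rewrite /D /m /pdot /pcross; ring.
  have e2 : D * d1.2 = m * d2.2.
    apply/eqP; rewrite -subr_eq0 -(mulr0 (- d2.1)) -cross0; apply/eqP.
    by rewrite /D /m /pdot /pcross; ring.
  by rewrite /pscale /g /h !(mulrAC _ (D + m)^-1) e1 e2.
have : (segment a v `&` segment v c)%classic (padd v (pscale g d1)).
  split.
    exists (1 - g); first by apply/andP; split; lra.
    by rewrite /padd /pscale /psub /d1 /=; congr (_, _); ring.
  by exists h; [apply/andP | rewrite gh].
rewrite meet => /= vz; move: (congr1 fst vz) (congr1 snd vz) => /= z1 z2.
apply: a_neq_v; rewrite [a]surjective_pairing [v]surjective_pairing.
have g_neq0 : g != 0 by rewrite gt_eqF.
by congr (_, _); apply/eqP; rewrite -subr_eq0; apply/eqP/(mulfI g_neq0); rewrite mulr0; lra.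
Qed.

Lemma vertex_outer_normal (P : set pt) a v c U W :
  segment a v `&` segment v c = [set v] -> a <> v -> v <> c ->
  (exists2 δ : R, 0 < δ & forall x, `|x.1| < δ -> `|x.2| < δ -> P (padd v x) ->
     segment a v (padd v x) \/ segment v c (padd v x)) ->
  pdot U U = 1 -> pdot U (psub v a) = 0 ->
  (forall b, relint_segment a v b -> outer_normal_at P b U) ->
  pdot W W = 1 -> pdot W (psub c v) = 0 ->
  (forall b, relint_segment v c b -> outer_normal_at P b W) ->
  outer_normal_at P v (padd U W).
Proof.
move=> meet a_neq_v v_neq_c [δ δ_gt0 near_v] U_unit U_perp U_normal W_unit W_perp W_normal.
have U_perp' : pdot U (psub a v) = 0.
  have -> : pdot U (psub a v) = - pdot U (psub v a) by rewrite /pdot /psub /=; ring.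
  by rewrite U_perp oppr0.
apply: corner_outer_normal U_unit W_unit U_perp' W_perp _ _ _ _ _ _.
- exact: segments_meet_not_codirected.
- by move=> s /relint_segment_end /U_normal.
- by move=> s /relint_segment_start /W_normal.
- exact: psub_neq0.
- by apply: psub_neq0 => /esym.
- exists δ => // x x1 x2 /(near_v x x1 x2) [/segment_end_ray | /segment_start_ray];
    by [left | right].
Qed.

End Vertex.

Section Polygon.
Variable R : realType.
Variables (n : nat) (p : nat -> (R * R)%type).

Lemma vtx_mod k : vtx n p (k %% n)%N = vtx n p k.
Proof. by rewrite /vtx modn_mod. Qed.

Lemma vtxS_mod k : vtx n p (k %% n)%N.+1 = vtx n p k.+1.
Proof. by rewrite /vtx -addn1 modnDml addn1. Qed.

Lemma edge_mod k : edge n p (k %% n)%N = edge n p k.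
Proof. by rewrite /edge vtx_mod vtxS_mod. Qed.

Lemma outer_unit_normal_mod k w :
  outer_unit_normal n p (k %% n)%N w = outer_unit_normal n p k w.
Proof. by rewrite /outer_unit_normal vtx_mod vtxS_mod. Qed.

Lemma modn_neqS k : (1 < n)%N -> (k %% n)%N <> (k.+1 %% n)%N.
Proof.
move=> n_gt1; rewrite -addn1 -modnDml addn1.
have : (k %% n < n)%N by rewrite ltn_pmod // ltnW.
move: (k %% n)%N => r; rewrite leq_eqVlt => /predU1P[r_n | r_lt].
  by rewrite r_n modnn => r0; move: n_gt1; rewrite -r_n r0.
by rewrite modn_small // => /eqP; rewrite eqn_leq ltnn andbF.
Qed.

Hypothesis simple : simple_polygon n p.

Lemma simple_vtx_neqS k : vtx n p k <> vtx n p k.+1.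
Proof.
have [n_ge3 distinct _ _] := simple; have n_gt1 : (1 < n)%N by apply: leq_trans n_ge3.
by apply: distinct; rewrite ?ltn_pmod ?(ltnW n_gt1) //; exact: modn_neqS.
Qed.

Lemma simple_vtx_notin_edge i k : (i < n)%N -> (k < n)%N -> k <> i -> k <> (i.+1 %% n)%N ->
  ~ edge n p k (vtx n p i.+1).
Proof.
move=> i_lt k_lt k_neq_i k_neq_j v_on_k; have [_ _ meet disjoint] := simple.
have [i_eq | i_neq] := eqVneq i (k.+1 %% n)%N.
  have : (edge n p k `&` edge n p k.+1)%classic (vtx n p i.+1).
    by split=> //; rewrite -edge_mod -i_eq; exact: segment_end.
  rewrite meet // => /= vtx_eq; have := @simple_vtx_neqS i.
  by rewrite vtx_eq -(vtx_mod k.+1) -i_eq.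
have : (edge n p i `&` edge n p k)%classic (vtx n p i.+1) by split=> //; exact: segment_end.
by rewrite disjoint //; [move/esym | apply/eqP].
Qed.

Lemma simple_near_vtx i : (i < n)%N -> exists2 δ : R, 0 < δ & forall x,
  `|x.1| < δ -> `|x.2| < δ -> polygon n p (padd (vtx n p i.+1) x) ->
  edge n p i (padd (vtx n p i.+1) x) \/ edge n p i.+1 (padd (vtx n p i.+1) x).
Proof.
move=> i_lt; set v := vtx n p i.+1.
have far_edges : for_small (fun δ => forall k, (k < n)%N -> k <> i -> k <> (i.+1 %% n)%N ->
    forall x, `|x.1| < δ -> `|x.2| < δ -> ~ edge n p k (padd v x)).
  apply: for_small_forall_ltn => k k_lt.
  have [[k_neq_i k_neq_j] | k_near] := pselect (k <> i /\ k <> (i.+1 %% n)%N).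
    have := closed_notin_box (@closed_segment R _ _)
      (simple_vtx_notin_edge i_lt k_lt k_neq_i k_neq_j).
    by apply: for_smallW => δ _ far _ _.
  by exists 1 => // δ _ k_neq_i k_neq_j; case: k_near.
have [δ δ_gt0 far] := for_small_witness far_edges.
exists δ => // x x1 x2 [k /= k_lt on_k].
have [k_i | k_neq_i] := eqVneq k i; first by left; rewrite -k_i.
have [k_j | k_neq_j] := eqVneq k (i.+1 %% n)%N; first by right; rewrite -edge_mod -k_j.
by case: (far k k_lt (elimN eqP k_neq_i) (elimN eqP k_neq_j) x x1 x2 on_k).
Qed.

End Polygon.

Theorem lemma3p1 (R : realType) (n : nat) (p : nat -> (R * R)%type)
    (u : nat -> (R * R)%type) :
  simple_polygon n p ->
  (forall i, (i < n)%N -> outer_unit_normal n p i (u i)) ->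
  exists2 e0 : R, 0 < e0 & forall e : R, 0 < e < e0 ->
    forall i, (i < n)%N ->
      exterior_poly (polygon n p)
        (padd (vtx n p i.+1) (pscale e (padd (u i) (u (i.+1 %% n)%N)))) /\
      interior_poly (polygon n p)
        (psub (vtx n p i.+1) (pscale e (padd (u i) (u (i.+1 %% n)%N)))).
Proof.
move=> simple normal; have [n_ge3 _ meet _] := simple.
apply: for_small_forall_ltn => i i_lt.
have [U_unit U_perp U_normal] := normal i i_lt.
have [W_unit W_perp W_normal] : outer_unit_normal n p i.+1 (u (i.+1 %% n)%N).
  by rewrite -outer_unit_normal_mod; apply/normal/ltn_pmod/(leq_trans _ n_ge3).
apply: vertex_outer_normal (meet i i_lt) _ _ (simple_near_vtx simple i_lt)
  U_unit U_perp U_normal W_unit W_perp W_normal; exact: simple_vtx_neqS.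
Qed.
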